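(* Let $b>2$ and $1<n<b$ be integers, and let $p$ be an $(n,b)$-palintiple. Then $p$ is shifted-symmetric if and only if $\gcd(b-n,n^2-1)\ge n+1$.
   Context: Let $b>2$ be an integer base and write $(d_k,d_{k-1},\ldots,d_0)_b=\sum_{j=0}^k d_j b^j$ with $0\le d_j<b$. A natural number $p=(d_k,\ldots,d_0)_b$ with $d_k\neq 0$ and $d_0\neq 0$ that is not a base-$b$ palindrome is an $(n,b)$-palintiple if $(d_k,\ldots,d_0)_b=n\,(d_0,d_1,\ldots,d_k)_b$ for an integer $n$ with $1<n<b$. Its carries $c_0,\ldots,c_{k+1}$ are the carries arising in the base-$b$ multiplication of $(d_0,\ldots,d_k)_b$ by $n$: $c_0=0$ and $n d_{k-j}+c_j=d_j+b\,c_{j+1}$ for $0\le j\le k$ (so $c_{k+1}=0$). The palintiple is shifted-symmetric if $c_j=c_{k-j+1}$ for all $0\le j\le k$. *)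

From mathcomp Require Import all_boot.
Set Implicit Arguments. Unset Strict Implicit. Unset Printing Implicit Defensive.

Definition digit (b p j : nat) : nat := (p %/ b ^ j) %% b.

(* index k of the leading digit of p (p has k+1 base-b digits, for p > 0). *)
Definition lead_idx (b p : nat) : nat := trunc_log b p.

Definition reversal (b p : nat) : nat :=
  \sum_(j < (lead_idx b p).+1) digit b p (lead_idx b p - j) * b ^ j.

Definition is_palindrome (b p : nat) : Prop :=
  forall j, j <= lead_idx b p -> digit b p j = digit b p (lead_idx b p - j).

Definition palintiple (n b p : nat) : Prop :=
  [/\ 0 < p, digit b p (lead_idx b p) != 0, digit b p 0 != 0,
      ~ is_palindrome b p & (1 < n < b) /\ p = n * reversal b p].

(* Carries c_j of the base-b multiplication of (d_0,...,d_k)_b by n: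
   c_0 = 0 and n d_{k-j} + c_j = d_j + b c_{j+1}, i.e.
   c_{j+1} = (n d_{k-j} + c_j) div b. *)
Fixpoint carry (n b p j : nat) : nat :=
  match j with
  | 0 => 0
  | j'.+1 => (n * digit b p (lead_idx b p - j') + carry n b p j') %/ b
  end.

Definition shifted_symmetric (n b p : nat) : Prop :=
  forall j, j <= lead_idx b p ->
    carry n b p j = carry n b p (lead_idx b p - j + 1).

From mathcomp Require Import all_boot.
From mathcomp Require Import zify ring.

(* Write d_j for the digits, k for the leading index and c_j for the carries.
   The multiplication p = n * reversal gives n d_(k-j) + c_j = d_j + b c_(j+1)
   for j <= k, with c_(k+1) = 0 and c_j < n.  Modulo g = gcd(b - n, n^2 - 1)
   we have b = n and n^2 = 1, so multiplying the equation at position j by n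
   and substituting the one at the mirror position k - j yields
   c_(k-j) = c_(j+1) mod g whenever c_j = c_(k-j+1); if g >= n + 1 all carries
   are below g, and shifted symmetry follows by induction on j.  Conversely,
   c_1 = c_k turns the equations at positions 0 and k into
   (n^2 - 1) d_0 = (b - n) c_1 with 0 < c_1 < n, so n^2 - 1 = (n - 1)(n + 1)
   divides g c_1 <= g (n - 1), whence g >= n + 1. *)

Lemma digit_lt b p j : 0 < b -> digit b p j < b.
Proof. by move=> b_gt0; rewrite /digit ltn_pmod. Qed.

Section Digits.

Variables b p : nat.
Hypothesis b_gt1 : 1 < b.

Lemma modn_expS j : p %% b ^ j.+1 = p %% b ^ j + digit b p j * b ^ j.
Proof.
have lt_mod : p %% b ^ j < b ^ j by rewrite ltn_pmod // expn_gt0 ltnW.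
have lt_digit := digit_lt b p j (ltnW b_gt1).
have p_eq : p = p %/ b ^ j.+1 * b ^ j.+1 + (digit b p j * b ^ j + p %% b ^ j).
  rewrite {1}(divn_eq p (b ^ j)) {1}(divn_eq (p %/ b ^ j) b) expnSr divnMA.
  by rewrite /digit; ring.
rewrite {1}p_eq modnMDl modn_small; first exact: addnC.
by rewrite {p_eq} expnS; nia.
Qed.

(* The j lowest digits of the reversal: reversal b p is
   rev_prefix (lead_idx b p) (lead_idx b p).+1. *)
Definition rev_prefix k j := \sum_(i < j) digit b p (k - i) * b ^ i.

Lemma rev_prefixS k j :
  rev_prefix k j.+1 = rev_prefix k j + digit b p (k - j) * b ^ j.
Proof. by rewrite /rev_prefix big_ord_recr. Qed.

Lemma rev_prefix_mod k j m : j <= m -> rev_prefix k m = rev_prefix k j %[mod b ^ j].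
Proof.
elim: m => [|m IHm]; first by rewrite leqn0 => /eqP ->.
rewrite leq_eqVlt => /orP[/eqP -> // | /[!ltnS] le_jm].
rewrite rev_prefixS (_ : b ^ m = b ^ (m - j) * b ^ j); last by rewrite -expnD subnK.
by rewrite -modnDml IHm // modnDml -modnDmr mulnA modnMl addn0.
Qed.

End Digits.

Lemma carry_lt n b p j : 0 < b -> 0 < n -> carry n b p j < n.
Proof.
move=> b_gt0 n_gt0; elim: j => [|j IHj] //=.
rewrite ltn_divLR //; have := digit_lt b p (lead_idx b p - j) b_gt0; nia.
Qed.

Section Palintiple.

Variables n b p : nat.
Hypothesis b_gt1 : 1 < b.
Hypothesis p_eq : p = n * reversal b p.

Let k := lead_idx b p.

(* The schoolbook product of the reversal by n, stopped after j digits. *)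
Lemma mul_rev_prefix j : j <= k.+1 ->
  n * rev_prefix b p k j = p %% b ^ j + carry n b p j * b ^ j.
Proof.
elim: j => [|j IHj] lt_jk; first by rewrite /rev_prefix big_ord0 modn1 muln0.
set s := n * digit b p (k - j) + carry n b p j.
have carryS : carry n b p j.+1 = s %/ b by [].
have lt_mod : p %% b ^ j < b ^ j by rewrite ltn_pmod // expn_gt0 ltnW.
have lt_smod : s %% b < b by rewrite ltn_pmod // ltnW.
have rev_eq : n * rev_prefix b p k j.+1
    = (p %% b ^ j + s %% b * b ^ j) + carry n b p j.+1 * b ^ j.+1.
  rewrite rev_prefixS mulnDr (IHj (ltnW lt_jk)) carryS expnS.
  have : s * b ^ j = (s %/ b * b + s %% b) * b ^ j by rewrite -divn_eq.
  rewrite /s; nia.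
have low_lt : p %% b ^ j + s %% b * b ^ j < b ^ j.+1 by rewrite expnS; nia.
suff -> : p %% b ^ j.+1 = p %% b ^ j + s %% b * b ^ j by [].
rewrite {1}p_eq -modnMmr (rev_prefix_mod _ _ _ _ _ lt_jk) modnMmr rev_eq.
by rewrite addnC modnMDl modn_small.
Qed.

Lemma carry_eq j : j <= k ->
  n * digit b p (k - j) + carry n b p j = digit b p j + b * carry n b p j.+1.
Proof.
move=> le_jk.
have := mul_rev_prefix j.+1 le_jk.
rewrite rev_prefixS modn_expS // mulnDr mul_rev_prefix ?leqW // expnS.
have : 0 < b ^ j by rewrite expn_gt0 ltnW.
nia.
Qed.

Lemma carry_last : 0 < p -> carry n b p k.+1 = 0.
Proof.
move=> p_gt0; have := mul_rev_prefix k.+1 (leqnn _).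
have lt_p : p < b ^ k.+1 by exact: trunc_log_ltn.
rewrite modn_small // -[rev_prefix _ _ _ _]/(reversal b p) -p_eq.
have : 0 < b ^ k.+1 by rewrite expn_gt0 ltnW.
nia.
Qed.

End Palintiple.

Lemma carry_congr {n b g x d a c c'} :
  g %| b - n -> g %| n ^ 2 - 1 -> 0 < n <= b ->
  n * x + c = d + b * c' -> n * d + a = x + b * c -> a < g -> c' < g -> a = c'.
Proof.
move=> /dvdnP[u gu] /dvdnP[v gv] /andP[n_gt0 le_nb] eq_j eq_mirror lt_a lt_c'.
have b_eq : b = n + u * g by lia.
have nn_eq : n * n = 1 + v * g by rewrite -gv; nia.
have e : v * x * g + a = (v * c' + n * u * c' + u * c) * g + c'.
  have : n * (n * x + c) = n * (d + b * c') by rewrite eq_j.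
  have : n * n * x = x + v * g * x by rewrite nn_eq; ring.
  have : n * n * c' = c' + v * g * c' by rewrite nn_eq; ring.
  rewrite b_eq in eq_mirror *; rewrite !mulnDr !mulnDl; nia.
by have := congr1 (modn^~ g) e; rewrite /= !modnMDl !modn_small.
Qed.

Lemma end_carries_eq {n b x d c} : n <= b ->
  n * x = d + b * c -> n * d + c = x -> (n ^ 2 - 1) * d = (b - n) * c.
Proof.
move=> le_nb eq0 eqk.
have : n * n * d + n * c = d + b * c by rewrite -eq0 -eqk; ring.
have : n * c <= b * c by rewrite leq_mul2r le_nb orbT.
rewrite !mulnBl mul1n expnS expn1; lia.
Qed.

Lemma gcd_ge_succ {n b d c} : 1 < n -> 0 < d -> c < n ->
  (n ^ 2 - 1) * d = (b - n) * c -> n + 1 <= gcdn (b - n) (n ^ 2 - 1).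
Proof.
move=> n_gt1 d_gt0 lt_cn eq_dc; set g := gcdn _ _.
have sq_gt0 : 0 < n ^ 2 - 1 by rewrite subn_gt0 (ltn_exp2l 0 2).
have g_gt0 : 0 < g by rewrite gcdn_gt0 sq_gt0 orbT.
have c_gt0 : 0 < c.
  rewrite lt0n; apply/eqP => c0; move: eq_dc; rewrite c0 muln0 => /eqP.
  by rewrite muln_eq0 eqn0Ngt sq_gt0 eqn0Ngt d_gt0.
have dvd_gc : n ^ 2 - 1 %| g * c.
  by rewrite muln_gcdl dvdn_gcd -eq_dc dvdn_mulr // dvdn_mulr.
have le_sq : n ^ 2 - 1 <= g * c by rewrite dvdn_leq // muln_gt0 g_gt0.
have : (n + 1) * (n - 1) <= g * (n - 1).
  apply: leq_trans (leq_trans le_sq _); first by rewrite expnS expn1; lia.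
  by rewrite leq_mul2l; apply/orP; right; lia.
by rewrite leq_pmul2r // subn_gt0.
Qed.

Theorem theorem1 (b n p : nat) :
  2 < b -> 1 < n < b -> palintiple n b p ->
  (shifted_symmetric n b p <-> n + 1 <= gcdn (b - n) (n ^ 2 - 1)).
Proof.
move=> b_gt2 /andP[n_gt1 lt_nb] [p_gt0 _ d0_neq0 not_pal [_ p_eq]].
have b_gt1 : 1 < b by apply: ltnW.
set k := lead_idx b p.
have k_gt0 : 0 < k.
  rewrite lt0n; apply/eqP => k0; apply: not_pal => j.
  by rewrite -/k k0 leqn0 => /eqP ->.
have carry_ltn j : carry n b p j < n by apply: carry_lt; lia.
have last0 : carry n b p k.+1 = 0 by apply: carry_last.
have eq_at := carry_eq n b p b_gt1 p_eq.
have eq0 := eq_at 0 (leq0n k).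
have eqk := eq_at k (leqnn k).
rewrite subn0 addn0 in eq0; rewrite subnn last0 muln0 addn0 in eqk.
split=> [sym | g_ge].
- have c1_ck : carry n b p 1 = carry n b p k by rewrite (sym 1) ?subnK.
  have d0_gt0 : 0 < digit b p 0 by rewrite lt0n.
  apply: (gcd_ge_succ n_gt1 d0_gt0 (carry_ltn 1)).
  by apply: (end_carries_eq (ltnW lt_nb) eq0); rewrite c1_ck.
- elim=> [|j IHj] lt_jk; first by rewrite subn0 addn1 last0.
  have eq_mirror := eq_at (k - j) (leq_subr j k).
  rewrite subKn ?(ltnW lt_jk) // -addn1 -(IHj (ltnW lt_jk)) in eq_mirror.
  rewrite addn1 subnSK //.
  apply/esym/(carry_congr (dvdn_gcdl _ _) (dvdn_gcdr _ _) _ _ eq_mirror).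
  + by rewrite (ltnW n_gt1) (ltnW lt_nb).
  + exact/eq_at/ltnW.
  + by have := carry_ltn (k - j); lia.
  + by have := carry_ltn j.+1; lia.
Qed.
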